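(* Let $q=[\alpha:\beta:\gamma]\in\mathcal C_0$ with $\beta\neq\gamma$ (i.e. $q\notin\mathcal H_0$), let $\mathcal H_q=\{\alpha x+\beta y-2\gamma z=0\}$ be the tangent line to $\mathcal C_0$ at $q$, and $$\mathcal C_q^{(4,1,1)}=\{(\beta-2\gamma)^2x^2+(3\beta^2-4\beta\gamma+2\gamma^2)y^2+2\alpha\beta xy-4\alpha\gamma xz-4\beta\gamma yz+4\beta(2\gamma-\beta)z^2=0\}.$$ Then the conics $Q\subset\mathbb P^2(\mathbb C)$ (possibly reducible or non-reduced) such that $Q\cap\mathcal C_0=\{q\}$ set-theoretically and $Q$ meets $\mathcal H_0$ in a single point without containing it, are exactly $2\mathcal H_q$ and $\mathcal C_q^{(4,1,1)}$; they meet $\mathcal H_0$ at $[2\gamma-\beta:\alpha:\alpha]$ and $[\alpha:2\gamma-\beta:2\gamma-\beta]$ respectively.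
   Context: In $\mathbb P^2(\mathbb C)$ with coordinates $[x:y:z]$: $\mathcal C_0=\{x^2+y^2-2z^2=0\}$ (a smooth conic) and $\mathcal H_0=\{y-z=0\}$ (a line). For a plane curve given by $f=0$ with $f$ a square of a linear form $\ell$, $2\{\ell=0\}$ denotes the double line. *)

(* The complex projective plane P^2(C) is modelled with
   C := complex R (= R[i]) for R : realType (the real numbers). *)
From HB Require Import structures.
From mathcomp Require Import all_boot all_order all_algebra.
From mathcomp Require Import complex.
From mathcomp Require Export reals.
Set Implicit Arguments. Unset Strict Implicit. Unset Printing Implicit Defensive.
Import Order.TTheory GRing.Theory Num.Theory.
Local Open Scope ring_scope.

(* Homogeneous coordinates [x:y:z] are represented by triples ((x, y), z). *)
Definition hcoord (F : Type) := (F * F * F)%type.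

Definition hzero (F : pzRingType) : hcoord F := (0, 0, 0).

Definition same_point (F : pzRingType) (u v : hcoord F) : Prop :=
  exists2 k : F, k != 0 & v = (k * u.1.1, k * u.1.2, k * u.2).

(* A plane conic: a nonzero quadratic form
   cxx x^2 + cyy y^2 + czz z^2 + cxy xy + cxz xz + cyz yz, up to scalars. *)
Record conic (F : Type) := Conic { cxx : F; cyy : F; czz : F; cxy : F; cxz : F; cyz : F }.

Definition conic_eval (F : pzRingType) (Q : conic F) (p : hcoord F) : F :=
  let: (x, y, z) := p in
  cxx Q * x ^+ 2 + cyy Q * y ^+ 2 + czz Q * z ^+ 2
  + cxy Q * (x * y) + cxz Q * (x * z) + cyz Q * (y * z).

Definition conic_nonzero (F : pzRingType) (Q : conic F) : Prop :=
  ~ (cxx Q = 0 /\ cyy Q = 0 /\ czz Q = 0 /\ cxy Q = 0 /\ cxz Q = 0 /\ cyz Q = 0).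

Definition conic_scale (F : pzRingType) (k : F) (Q : conic F) : conic F :=
  Conic (k * cxx Q) (k * cyy Q) (k * czz Q) (k * cxy Q) (k * cxz Q) (k * cyz Q).

(* Equality of conics (as curves possibly non-reduced): proportional equations. *)
Definition same_conic (F : pzRingType) (Q Q' : conic F) : Prop :=
  exists2 k : F, k != 0 & Q' = conic_scale k Q.

Definition double_line (F : pzRingType) (a b c : F) : conic F :=
  Conic (a ^+ 2) (b ^+ 2) (c ^+ 2) (2 * a * b) (2 * a * c) (2 * b * c).

Definition C0 (F : pzRingType) : conic F := Conic 1 1 (- 2) 0 0 0.

Definition on_H0 (F : pzRingType) (p : hcoord F) : Prop := p.1.2 = p.2.

Definition Cq411 (F : pzRingType) (a b c : F) : conic F :=
  Conic ((b - 2 * c) ^+ 2) (3 * b ^+ 2 - 4 * b * c + 2 * c ^+ 2)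
        (4 * b * (2 * c - b)) (2 * a * b) (- (4 * a * c)) (- (4 * b * c)).

Definition meets_C0_only_at (F : pzRingType) (Q : conic F) (q : hcoord F) : Prop :=
  forall p : hcoord F, p <> hzero F ->
    (conic_eval Q p = 0 /\ conic_eval (C0 F) p = 0) <-> same_point q p.

Definition meets_H0_only_at (F : pzRingType) (Q : conic F) (p0 : hcoord F) : Prop :=
  p0 <> hzero F /\
  forall p : hcoord F, p <> hzero F ->
    (conic_eval Q p = 0 /\ on_H0 p) <-> same_point p0 p.

Definition contains_H0 (F : pzRingType) (Q : conic F) : Prop :=
  forall p : hcoord F, on_H0 p -> conic_eval Q p = 0.

(* Parametrize C0 by (s : t) |-> C0_param s t; the point q has parameter (b - c : a - c).
   If Q meets C0 only at q, the binary quartic (s, t) |-> Q (C0_param s t) has that single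
   root, so over an algebraically closed field it is a multiple of L^4, L the linear form
   vanishing at (b - c : a - c). The tangent form T restricts to a nonzero multiple of L^2,
   hence Q - mu T^2 vanishes on C0 for a suitable mu, i.e. Q = l C0 + mu T^2.
   On H0 = {y = z} this conic restricts to l (x^2 - y^2) + mu (a x + (b - 2c) y)^2, whose
   discriminant is 4 l (l - 2 (b - c)^2 mu); a single intersection point forces it to
   vanish, and l = 0 resp. l = 2 (b - c)^2 mu give 2 H_q resp. C_q^(4,1,1). Conversely both
   restrict on H0 to the square of a nonzero linear form. *)

From HB Require Import structures.
From mathcomp Require Import all_boot all_order all_algebra.
From mathcomp Require Import complex.
From mathcomp Require Import reals.
From mathcomp Require Import ring.
Import Order.TTheory GRing.Theory Num.Theory.
Set Implicit Arguments. Unset Strict Implicit. Unset Printing Implicit Defensive.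
Local Open Scope ring_scope.

(* [ring_mod H W] proves [x = y] when [x - y = e * W] is a ring identity and [H : e = 0]. *)
Ltac ring_mod H W :=
  lazymatch type of H with ?e = 0 =>
    apply/eqP; rewrite -subr_eq0; apply/eqP;
    transitivity (e * W); [ring | by rewrite H mul0r] end.

Lemma lincomb2_eq0 (R : pzRingType) (x y1 y2 c1 c2 : R) :
  x = c1 * y1 + c2 * y2 -> y1 = 0 -> y2 = 0 -> x = 0.
Proof. by move=> -> -> ->; rewrite !mulr0 addr0. Qed.

Lemma lincomb3_eq0 (R : pzRingType) (x y1 y2 y3 c1 c2 c3 : R) :
  x = c1 * y1 + c2 * y2 + c3 * y3 -> y1 = 0 -> y2 = 0 -> y3 = 0 -> x = 0.
Proof. by move=> -> -> -> ->; rewrite !mulr0 !addr0. Qed.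

Lemma lincomb4_eq0 (R : pzRingType) (x y1 y2 y3 y4 c1 c2 c3 c4 : R) :
  x = c1 * y1 + c2 * y2 + c3 * y3 + c4 * y4 ->
  y1 = 0 -> y2 = 0 -> y3 = 0 -> y4 = 0 -> x = 0.
Proof. by move=> -> -> -> -> ->; rewrite !mulr0 !addr0. Qed.

Lemma sqrf_eq0P (R : idomainType) (x : R) : x ^+ 2 = 0 -> x = 0.
Proof. by move/eqP; rewrite sqrf_eq0 => /eqP. Qed.

Definition conic_add (R : pzRingType) (Q Q' : conic R) : conic R :=
  Conic (cxx Q + cxx Q') (cyy Q + cyy Q') (czz Q + czz Q')
        (cxy Q + cxy Q') (cxz Q + cxz Q') (cyz Q + cyz Q').

Definition conic_map (R S : pzRingType) (f : R -> S) (Q : conic R) : conic S :=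
  Conic (f (cxx Q)) (f (cyy Q)) (f (czz Q)) (f (cxy Q)) (f (cxz Q)) (f (cyz Q)).

Definition hmap (R S : Type) (f : R -> S) (p : hcoord R) : hcoord S :=
  (f p.1.1, f p.1.2, f p.2).

Section ConicEval.
Variable R : comPzRingType.
Implicit Types (Q : conic R) (p : hcoord R).

Lemma conic_evalZ Q k x y z :
  conic_eval Q (k * x, k * y, k * z) = k ^+ 2 * conic_eval Q (x, y, z).
Proof. rewrite /conic_eval; ring. Qed.

Lemma conic_eval_scale k Q p : conic_eval (conic_scale k Q) p = k * conic_eval Q p.
Proof. by case: p => [[x y] z]; rewrite /conic_eval /=; ring. Qed.

Lemma conic_eval_add Q Q' p : conic_eval (conic_add Q Q') p = conic_eval Q p + conic_eval Q' p.
Proof. by case: p => [[x y] z]; rewrite /conic_eval /=; ring. Qed.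

Lemma conic_add_scaleNK k Q Q' :
  conic_add (conic_add Q (conic_scale (- k) Q')) (conic_scale k Q') = Q.
Proof. by case: Q => *; rewrite /conic_add /conic_scale /=; congr Conic; ring. Qed.

Lemma conic_eval_H0 Q x y : conic_eval Q (x, y, y) =
  cxx Q * x ^+ 2 + (cxy Q + cxz Q) * x * y + (cyy Q + czz Q + cyz Q) * y ^+ 2.
Proof. rewrite /conic_eval; ring. Qed.

Lemma C0_eval x y z : conic_eval (C0 R) (x, y, z) = x ^+ 2 + y ^+ 2 - 2 * z ^+ 2.
Proof. rewrite /conic_eval /=; ring. Qed.

Lemma rmorph_conic_eval (S : comPzRingType) (f : {rmorphism R -> S}) Q p :
  f (conic_eval Q p) = conic_eval (conic_map f Q) (hmap f p).
Proof. by case: p => [[x y] z]; rewrite /conic_eval /= !rmorphD !rmorphM ?rmorphXn. Qed.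

End ConicEval.

Section ConicScale.
Variable R : idomainType.
Variables (k : R) (Q : conic R).
Hypothesis k_neq0 : k != 0.

Lemma conic_eval_scale_eq0 p : conic_eval (conic_scale k Q) p = 0 <-> conic_eval Q p = 0.
Proof.
rewrite conic_eval_scale; split=> [/eqP|->]; last by rewrite mulr0.
by rewrite mulf_eq0 (negbTE k_neq0) => /eqP.
Qed.

Lemma meets_C0_only_at_scale q : meets_C0_only_at Q q -> meets_C0_only_at (conic_scale k Q) q.
Proof. by move=> HQ p pn; rewrite conic_eval_scale_eq0; exact: HQ. Qed.

Lemma meets_H0_only_at_scale p0 : meets_H0_only_at Q p0 -> meets_H0_only_at (conic_scale k Q) p0.
Proof. by case=> p0n HQ; split=> // p pn; rewrite conic_eval_scale_eq0; exact: HQ. Qed.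

Lemma contains_H0_scale : contains_H0 (conic_scale k Q) -> contains_H0 Q.
Proof. by move=> HQ p /HQ /conic_eval_scale_eq0. Qed.

End ConicScale.

Lemma same_conic_meets (R : idomainType) (Q Q' : conic R) q p0 : same_conic Q Q' ->
  meets_C0_only_at Q q -> meets_H0_only_at Q p0 -> ~ contains_H0 Q ->
  meets_C0_only_at Q' q /\ (exists p0, meets_H0_only_at Q' p0) /\ ~ contains_H0 Q'.
Proof.
case=> k k_neq0 -> QC0 QH0 Q_notH0; split; last split.
- exact: meets_C0_only_at_scale.
- by exists p0; apply: meets_H0_only_at_scale.
- by move/(contains_H0_scale k_neq0).
Qed.

Definition C0_param (R : pzRingType) (s t : R) : hcoord R :=
  (s ^+ 2 - 2 * s * t - t ^+ 2, - s ^+ 2 - 2 * s * t + t ^+ 2, s ^+ 2 + t ^+ 2).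

Lemma C0_eval_param (R : comPzRingType) (s t : R) : conic_eval (C0 R) (C0_param s t) = 0.
Proof. rewrite C0_eval; ring. Qed.

Lemma conic_eval_C0_paramZ (R : comPzRingType) (Q : conic R) k s t :
  conic_eval Q (C0_param (k * s) (k * t)) = k ^+ 4 * conic_eval Q (C0_param s t).
Proof.
rewrite /C0_param (_ : k ^+ 4 = (k ^+ 2) ^+ 2) -?conic_evalZ; last by rewrite -exprM.
by congr conic_eval; congr (_, _, _); ring.
Qed.

Lemma C0_param_map (R S : comPzRingType) (f : {rmorphism R -> S}) s t :
  hmap f (C0_param s t) = C0_param (f s) (f t).
Proof.
by rewrite /hmap /C0_param /=; congr (_, _, _);
  rewrite ?rmorphB ?rmorphD ?rmorphN !rmorphXn ?rmorphM ?rmorph_nat.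
Qed.

Lemma C0_param_eq0 (F : numFieldType) (s t : F) : C0_param s t = hzero F -> s = 0 /\ t = 0.
Proof.
case=> hx hy hz.
have s2 : s ^+ 2 = 0.
  by apply: (lincomb3_eq0 (c1 := 4^-1) (c2 := - 4^-1) (c3 := 2^-1) _ hx hy hz); field.
by move: hz; rewrite s2 add0r => /sqrf_eq0P t0; split=> //; apply: sqrf_eq0P.
Qed.

Lemma conic_vanishing_on_C0 (F : numFieldType) (Q : conic F) :
  (forall s t, conic_eval Q (C0_param s t) = 0) -> Q = conic_scale (cxx Q) (C0 F).
Proof.
case: Q => xx yy zz xy xz yz /= HQ.
have := HQ 1 2; have := HQ 1 (-1); have := HQ 1 1; have := HQ 0 1; have := HQ 1 0.
rewrite /conic_eval /C0_param /= => e1 e2 e3 e4 e5.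
have xz0 : xz = 0.
  apply: (lincomb4_eq0 (c1 := 4^-1) (c2 := - 4^-1) (c3 := - 16^-1) (c4 := 16^-1) _ e1 e2 e3 e4).
  by field.
have yz0 : yz = 0.
  apply: (lincomb4_eq0 (c1 := - 4^-1) (c2 := 4^-1) (c3 := - 16^-1) (c4 := 16^-1) _ e1 e2 e3 e4).
  by field.
subst xz yz.
have xy0 : xy = 0 by apply: (lincomb2_eq0 (c1 := - 2^-1) (c2 := 8^-1) _ e1 e4); field.
subst xy.
have yy_xx : yy - xx = 0 by apply: (lincomb2_eq0 (c1 := - 24^-1) (c2 := 25 / 96) _ e5 e4); field.
move/eqP: yy_xx; rewrite subr_eq0 => /eqP yy_xx; subst yy.
have zz_xx : zz + 2 * xx = 0 by rewrite -e1; ring.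
rewrite /conic_scale /C0 /=; congr Conic; rewrite ?mulr1 ?mulr0 //.
by rewrite -[zz](addrK (2 * xx)) zz_xx; ring.
Qed.

Lemma conic_eval_C0_param_poly (R : comNzRingType) (Q : conic R) (sigma tau : {poly R}) :
  exists P : {poly R}, forall r, P.[r] = conic_eval Q (C0_param sigma.[r] tau.[r]).
Proof.
exists (conic_eval (conic_map polyC Q) (C0_param sigma tau)) => r.
rewrite -[LHS]/(horner_eval r _) rmorph_conic_eval C0_param_map.
by case: Q => * /=; rewrite !horner_evalE !hornerC.
Qed.

Lemma binary_form_single_root (F : closedFieldType) n (f : F -> F -> F) (s0 t0 : F) :
  (0 < n)%N -> s0 != 0 ->
  (forall k s t, f (k * s) (k * t) = k ^+ n * f s t) ->
  (exists P : {poly F}, forall r, P.[r] = f (s0 * r) (t0 * r + 1)) ->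
  (forall s t, f s t = 0 -> t * s0 = s * t0) -> f s0 t0 = 0 ->
  forall s t, f s t * s0 ^+ n = f 0 1 * (t * s0 - s * t0) ^+ n.
Proof.
move=> n_gt0 s0n fZ [P fP] f_root f0 s t.
have chart_const r : f (s0 * r) (t0 * r + 1) = f 0 1.
  have P_rootless x : ~~ root P x.
    apply/rootP; rewrite fP => /f_root e.
    have s0E : (t0 * x + 1) * s0 - s0 * x * t0 = s0 by ring.
    by move: s0n; rewrite -s0E e subrr eqxx.
  have /eqP P1 : size P == 1%N.
    by apply: contraT => /closed_rootP [x]; rewrite (negbTE (P_rootless x)).
  have -> : f 0 1 = P.[0] by rewrite fP !mulr0 add0r.
  by rewrite -fP (size1_polyC (eq_leq P1)) !hornerC.
have [L0|Ln] := eqVneq (t * s0 - s * t0) 0.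
  rewrite L0 expr0n gtn_eqF // mulr0.
  have -> : t = s / s0 * t0.
    by apply: (mulIf s0n); rewrite mulrAC divfK //; apply/eqP; rewrite -subr_eq0 L0.
  by rewrite -{1}(divfK s0n s) fZ f0 mulr0 mul0r.
set L := t * s0 - s * t0 in Ln *.
have es : s = L / s0 * (s0 * (s / L)) by field; rewrite Ln s0n.
have et : t = L / s0 * (t0 * (s / L) + 1) by rewrite /L; field; rewrite Ln s0n.
rewrite {1}es {1}et fZ chart_const expr_div_n mulrAC divfK ?expf_neq0 //.
by rewrite mulrC.
Qed.

Lemma same_point_H0_cross (R : comPzRingType) (p0 : hcoord R) x1 y1 x2 y2 :
  same_point p0 (x1, y1, y1) -> same_point p0 (x2, y2, y2) -> x1 * y2 = x2 * y1.
Proof. by case=> k1 _ [-> -> _] [k2 _ [-> -> _]]; ring. Qed.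

Lemma meets_H0_only_at_disc (F : numClosedFieldType) (Q : conic F) p0 al be ga :
  (forall x y, conic_eval Q (x, y, y) = al * x ^+ 2 + be * x * y + ga * y ^+ 2) ->
  meets_H0_only_at Q p0 -> be ^+ 2 - 4 * al * ga = 0.
Proof.
move=> QH0 [_ HQ]; apply/eqP; apply: contraT => D_neq0.
have root_on_H0 x y : (x != 0) || (y != 0) ->
    al * x ^+ 2 + be * x * y + ga * y ^+ 2 = 0 -> same_point p0 (x, y, y).
  move=> xy_neq0 Qxy; apply/(HQ _ _).1; last by rewrite QH0.
  by case=> x0 y0 _; move: xy_neq0; rewrite x0 y0 eqxx.
have [al0|al_neq0] := eqVneq al 0.
  have be_neq0 : be != 0.
    by apply: contraNneq D_neq0 => be0; rewrite al0 be0; apply/eqP; ring.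
  have r1 : same_point p0 (1, 0, 0).
    by apply: root_on_H0; rewrite ?oner_neq0 // al0; ring.
  have r2 : same_point p0 (ga, - be, - be).
    by apply: root_on_H0; rewrite ?oppr_eq0 ?be_neq0 ?orbT // al0; ring.
  move: (same_point_H0_cross r1 r2); rewrite mul1r mulr0 => /eqP.
  by rewrite oppr_eq0 (negbTE be_neq0).
set D := be ^+ 2 - 4 * al * ga in D_neq0.
have d_neq0 : sqrtC D != 0 by apply: contraNneq D_neq0 => d0; rewrite -(sqrtCK D) sqrf_eq0 d0.
have two_al_neq0 : 2 * al != 0 by rewrite mulf_neq0 // pnatr_eq0.
have root_d e : e ^+ 2 = D ->
    al * (- be + e) ^+ 2 + be * (- be + e) * (2 * al) + ga * (2 * al) ^+ 2 = 0.
  by move=> eD; transitivity (al * (e ^+ 2 - D)); [rewrite /D; ring | rewrite eD subrr mulr0].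
have r1 : same_point p0 (- be + sqrtC D, 2 * al, 2 * al).
  by apply: root_on_H0; rewrite ?two_al_neq0 ?orbT // root_d ?sqrtCK.
have r2 : same_point p0 (- be + - sqrtC D, 2 * al, 2 * al).
  by apply: root_on_H0; rewrite ?two_al_neq0 ?orbT // root_d ?sqrrN ?sqrtCK.
move: (same_point_H0_cross r1 r2) => /eqP; rewrite -subr_eq0 => /eqP cross0.
have : 4 * al * sqrtC D = 0 by rewrite -cross0; ring.
by move/eqP; rewrite !mulf_eq0 pnatr_eq0 (negbTE al_neq0) (negbTE d_neq0).
Qed.

Lemma meets_H0_only_at_square (F : fieldType) (Q : conic F) u v :
  (forall x y, conic_eval Q (x, y, y) = (u * x + v * y) ^+ 2) -> (u != 0) || (v != 0) ->
  meets_H0_only_at Q (- v, u, u) /\ ~ contains_H0 Q.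
Proof.
move=> QH0 uv_neq0; split; last first.
  move=> H0_in_Q; move: uv_neq0.
  have := H0_in_Q (1, 0, 0) erefl; have := H0_in_Q (0, 1, 1) erefl.
  rewrite !QH0 !mulr1 !mulr0 addr0 add0r => /sqrf_eq0P -> /sqrf_eq0P ->.
  by rewrite eqxx.
split=> [[v0 u0 _]|].
  by move: uv_neq0; rewrite u0 -(oppr_eq0 v) v0 eqxx.
case=> [[x y] z] p_neq0; split; last first.
  by case=> k _ [-> -> ->]; split=> //; rewrite QH0; apply/eqP; rewrite sqrf_eq0; apply/eqP; ring.
case=> Qp; rewrite /on_H0 /= => yz; subst z.
move: Qp; rewrite QH0 => /sqrf_eq0P lin0.
have [u0|u_neq0] := eqVneq u 0.
  have v_neq0 : v != 0 by move: uv_neq0; rewrite u0 eqxx.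
  have y0 : y = 0 by apply: (mulfI v_neq0); rewrite mulr0 -lin0 u0 mul0r add0r.
  have x_neq0 : x != 0 by apply/eqP => x0; apply: p_neq0; rewrite x0 y0.
  exists (- x / v); first by rewrite mulf_neq0 ?oppr_eq0 ?invr_eq0.
  by rewrite /= u0 y0 !mulr0; congr (_, _, _); field.
have y_neq0 : y != 0.
  apply/eqP => y0; apply: p_neq0; move: lin0; rewrite y0 mulr0 addr0 => /eqP.
  by rewrite mulf_eq0 (negbTE u_neq0) => /eqP ->.
have ux : u * x = - (v * y) by apply/eqP; rewrite -subr_eq0 opprK lin0.
exists (y / u); first by rewrite mulf_neq0 ?invr_eq0.
by rewrite -[x](mulKf u_neq0) ux /=; congr (_, _, _); field.
Qed.

Section TangentLine.
Variable F : numFieldType.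
Variables a b c : F.
Hypothesis q_neq0 : (a, b, c) <> hzero F.
Hypothesis q_on_C0 : a ^+ 2 + b ^+ 2 - 2 * c ^+ 2 = 0.

Definition tangent_form (p : hcoord F) : F := a * p.1.1 + b * p.1.2 - 2 * c * p.2.

Lemma conic_eval_double_tangent p :
  conic_eval (double_line a b (- (2 * c))) p = tangent_form p ^+ 2.
Proof. by case: p => [[x y] z]; rewrite /conic_eval /tangent_form /=; ring. Qed.

Lemma conic_eval_Cq411 p :
  conic_eval (Cq411 a b c) p = 2 * (b - c) ^+ 2 * conic_eval (C0 F) p + tangent_form p ^+ 2.
Proof.
by case: p => [[x y] z]; rewrite /conic_eval /tangent_form /=; ring_mod q_on_C0 (- x ^+ 2).
Qed.

Lemma tangent_form_q : tangent_form (a, b, c) = 0.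
Proof. by rewrite /tangent_form /=; ring_mod q_on_C0 (1 : F). Qed.

Lemma C0_tangent_point p : p <> hzero F -> conic_eval (C0 F) p = 0 ->
  tangent_form p = 0 -> same_point (a, b, c) p.
Proof.
case: p => [[x y] z] p_neq0; rewrite C0_eval /tangent_form /= => p_on_C0 tan0.
have xy_minor : a * y - b * x = 0.
  apply: sqrf_eq0P; apply: (lincomb3_eq0 (c1 := x ^+ 2 + y ^+ 2) (c2 := 2 * c ^+ 2)
    (c3 := - (a * x + b * y + 2 * c * z)) _ q_on_C0 p_on_C0 tan0); ring.
have [c0|c_neq0] := eqVneq c 0.
  subst c.
  have a_neq0 : a != 0.
    apply/eqP => a0; apply: q_neq0; rewrite a0 (_ : b = 0) //.
    by apply: sqrf_eq0P; rewrite -q_on_C0 a0; ring.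
  have yE : y = b * x / a.
    apply: (mulfI a_neq0); rewrite mulrCA divff // mulr1.
    by apply/eqP; rewrite -subr_eq0 xy_minor.
  have : 2 * a ^+ 2 * z ^+ 2 = 0.
    apply: (lincomb3_eq0 (c1 := x ^+ 2) (c2 := a * y + b * x) (c3 := - a ^+ 2) _
      q_on_C0 xy_minor p_on_C0); ring.
  move/eqP; rewrite !mulf_eq0 pnatr_eq0 (negbTE a_neq0) /= orbb => /eqP z0.
  have x_neq0 : x != 0 by apply/eqP => x0; apply: p_neq0; rewrite yE z0 x0 mulr0 mul0r.
  exists (x / a); first by rewrite mulf_neq0 ?invr_eq0.
  by rewrite yE z0 /=; congr (_, _, _); field.
have mul2c_eq0 e : 2 * c * e = 0 -> e = 0.
  by move/eqP; rewrite !mulf_eq0 pnatr_eq0 (negbTE c_neq0) => /eqP.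
have xz_minor : x * c - a * z = 0.
  apply: mul2c_eq0; apply: (lincomb3_eq0 (c1 := - b) (c2 := - x) (c3 := a) _
    xy_minor q_on_C0 tan0); ring.
have yz_minor : y * c - b * z = 0.
  apply: mul2c_eq0; apply: (lincomb3_eq0 (c1 := a) (c2 := - y) (c3 := b) _
    xy_minor q_on_C0 tan0); ring.
have xE : x = a * z / c.
  by apply: (mulIf c_neq0); rewrite divfK //; apply/eqP; rewrite -subr_eq0 xz_minor.
have yE : y = b * z / c.
  by apply: (mulIf c_neq0); rewrite divfK //; apply/eqP; rewrite -subr_eq0 yz_minor.
have z_neq0 : z != 0.
  by apply/eqP => z0; apply: p_neq0; rewrite xE yE z0 !(mulr0, mul0r).
exists (z / c); first by rewrite mulf_neq0 ?invr_eq0.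
by rewrite xE yE /=; congr (_, _, _); field.
Qed.

Lemma pencil_meets_C0_only_at_q (Q : conic F) g :
  (forall p, conic_eval Q p = g * conic_eval (C0 F) p + tangent_form p ^+ 2) ->
  meets_C0_only_at Q (a, b, c).
Proof.
move=> QE p p_neq0; split.
  case=> Qp p_on_C0; apply: C0_tangent_point => //; apply: sqrf_eq0P.
  by rewrite -Qp QE p_on_C0 mulr0 add0r.
case=> k _ ->; rewrite !conic_evalZ QE C0_eval tangent_form_q q_on_C0.
by split; ring.
Qed.

Lemma double_tangent_meets_C0 : meets_C0_only_at (double_line a b (- (2 * c))) (a, b, c).
Proof.
have := @pencil_meets_C0_only_at_q (double_line a b (- (2 * c))) 0; apply=> p.
by rewrite conic_eval_double_tangent mul0r add0r.
Qed.

Lemma Cq411_meets_C0 : meets_C0_only_at (Cq411 a b c) (a, b, c).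
Proof. exact: pencil_meets_C0_only_at_q conic_eval_Cq411. Qed.

Lemma tangent_H0_neq0 : (a != 0) || (b - 2 * c != 0).
Proof.
apply: contraT; rewrite negb_or !negbK => /andP [/eqP a0 /eqP b2c].
have c0 : c = 0.
  apply: sqrf_eq0P; apply: (lincomb2_eq0 (c1 := 2^-1) (c2 := - 2^-1 * (b + 2 * c)) _
    q_on_C0 b2c).
  by rewrite a0; field.
by case: q_neq0; move: b2c; rewrite a0 c0 mulr0 subr0 => ->.
Qed.

Lemma double_tangent_meets_H0 :
  meets_H0_only_at (double_line a b (- (2 * c))) (2 * c - b, a, a) /\
  ~ contains_H0 (double_line a b (- (2 * c))).
Proof.
rewrite -opprB; apply: meets_H0_only_at_square tangent_H0_neq0 => x y.
by rewrite conic_eval_double_tangent /tangent_form /=; ring.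
Qed.

Lemma Cq411_meets_H0 :
  meets_H0_only_at (Cq411 a b c) (a, 2 * c - b, 2 * c - b) /\ ~ contains_H0 (Cq411 a b c).
Proof.
rewrite -[a in (a, _, _)]opprK; apply: meets_H0_only_at_square.
  by move=> x y; rewrite /conic_eval /=; ring_mod q_on_C0 (- y ^+ 2).
by rewrite oppr_eq0 -(oppr_eq0 (2 * c - b)) opprB orbC tangent_H0_neq0.
Qed.

End TangentLine.

Section Classification.
Variable F : numClosedFieldType.
Variables a b c : F.
Hypothesis q_neq0 : (a, b, c) <> hzero F.
Hypothesis q_on_C0 : a ^+ 2 + b ^+ 2 - 2 * c ^+ 2 = 0.
Hypothesis b_neq_c : b != c.

Local Notation T := (tangent_form a b c).
Local Notation DT := (double_line a b (- (2 * c))).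

Lemma conic_eval_C0_param_q (Q : conic F) :
  conic_eval Q (C0_param (b - c) (a - c)) = (2 * (2 * c - a - b)) ^+ 2 * conic_eval Q (a, b, c).
Proof.
by rewrite -conic_evalZ /C0_param; congr conic_eval; congr (_, _, _); ring_mod q_on_C0 (1 : F).
Qed.

Lemma C0_param_root_q (Q : conic F) s t : meets_C0_only_at Q (a, b, c) ->
  conic_eval Q (C0_param s t) = 0 -> t * (b - c) = s * (a - c).
Proof.
move=> HQ Qst.
have [st_eq0|st_neq0] := eqVneq (C0_param s t) (hzero F).
  by have [-> ->] := C0_param_eq0 st_eq0; rewrite !mul0r.
have [k k_neq0] := (HQ _ (elimN eqP st_neq0)).1 (conj Qst (C0_eval_param s t)).
rewrite /C0_param /= => -[ex ey ez]; apply: (mulfI k_neq0).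
transitivity (t * (k * b - k * c)); first ring.
rewrite -ey -ez; transitivity (s * (k * a - k * c)); last ring.
by rewrite -ex -ez; ring.
Qed.

Lemma tangent_form_C0_param s t :
  T (C0_param s t) * (b - c) ^+ 2 = (b - a - 2 * c) * (t * (b - c) - s * (a - c)) ^+ 2.
Proof.
by rewrite /tangent_form /C0_param /=; ring_mod q_on_C0 ((a - b) * s ^+ 2 - 2 * (b - c) * s * t).
Qed.

Lemma tangent_form_C0_param_coef_neq0 : b - a - 2 * c != 0.
Proof.
apply/eqP => coef0; move: b_neq_c.
have ac0 : (a + c) ^+ 2 = 0.
  apply: (lincomb2_eq0 (c1 := 2^-1) (c2 := - 2^-1 * (b + a + 2 * c)) _ q_on_C0 coef0).
  by field.
rewrite (_ : b = (b - a - 2 * c) + (a + c) + c); last ring.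
by rewrite coef0 (sqrf_eq0P ac0) !add0r eqxx.
Qed.

Lemma meets_C0_only_at_q_pencil (Q : conic F) : meets_C0_only_at Q (a, b, c) ->
  exists l m, Q = conic_add (conic_scale l (C0 F)) (conic_scale m DT).
Proof.
move=> HQ.
have Qq : conic_eval Q (a, b, c) = 0.
  by have [] // := (HQ _ q_neq0).2; exists 1; rewrite ?oner_neq0 // !mul1r.
have bc_neq0 : b - c != 0 by rewrite subr_eq0.
have QE s t : conic_eval Q (C0_param s t) * (b - c) ^+ 4 =
    conic_eval Q (C0_param 0 1) * (t * (b - c) - s * (a - c)) ^+ 4.
  apply: (@binary_form_single_root _ 4 (fun s t => conic_eval Q (C0_param s t))) => //.
  - exact: conic_eval_C0_paramZ.
  - have [P PE] := conic_eval_C0_param_poly Q ((b - c)%:P * 'X) ((a - c)%:P * 'X + 1%:P).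
    by exists P => r; rewrite PE hornerD hornerC !hornerCM hornerX.
  - by move=> {}s {}t; apply: C0_param_root_q.
  - by rewrite conic_eval_C0_param_q Qq mulr0.
pose mu := conic_eval Q (C0_param 0 1) / (b - a - 2 * c) ^+ 2.
set R := conic_add Q (conic_scale (- mu) DT).
have R_on_C0 s t : conic_eval R (C0_param s t) = 0.
  apply: (mulIf (expf_neq0 4 bc_neq0)); rewrite mul0r.
  transitivity (conic_eval Q (C0_param s t) * (b - c) ^+ 4
                - mu * (T (C0_param s t) * (b - c) ^+ 2) ^+ 2).
    by rewrite conic_eval_add conic_eval_scale conic_eval_double_tangent; ring.
  rewrite QE tangent_form_C0_param /mu; field.
  by rewrite tangent_form_C0_param_coef_neq0.
by exists (cxx R), mu; rewrite -(conic_vanishing_on_C0 R_on_C0) conic_add_scaleNK.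
Qed.

Lemma meets_C0_q_H0_once_cases (Q : conic F) : conic_nonzero Q ->
  meets_C0_only_at Q (a, b, c) -> (exists p0, meets_H0_only_at Q p0) ->
  same_conic DT Q \/ same_conic (Cq411 a b c) Q.
Proof.
move=> Q_neq0 /meets_C0_only_at_q_pencil [l [m QE]] [p0].
move=> /(meets_H0_only_at_disc (conic_eval_H0 Q)) disc0.
rewrite QE /conic_add /conic_scale /C0 /double_line /= in disc0.
have : 4 * l * (l - 2 * (b - c) ^+ 2 * m) = 0.
  by apply: (lincomb2_eq0 (c1 := 1) (c2 := - (4 * l * m)) _ disc0 q_on_C0); ring.
have m_neq0 : l = 0 -> m != 0.
  move=> l0; apply/eqP => m0; apply: Q_neq0.
  by rewrite QE l0 m0 /=; do !split; ring.
move/eqP; rewrite !mulf_eq0 pnatr_eq0 /= => /orP [/eqP l0 | /eqP l_eq].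
  left; exists m; first exact: m_neq0.
  by rewrite QE l0 /conic_add /conic_scale /double_line /=; congr Conic; ring.
have lE : l = 2 * (b - c) ^+ 2 * m by apply/eqP; rewrite -subr_eq0 l_eq.
right; exists m.
  by apply/eqP => m0; move: m_neq0; rewrite lE m0 mulr0 eqxx => /(_ erefl).
rewrite QE lE /conic_add /conic_scale /Cq411 /C0 /double_line /=.
by congr Conic; try ring; ring_mod q_on_C0 m.
Qed.

Lemma meets_C0_q_H0_onceP (Q : conic F) : conic_nonzero Q ->
  (meets_C0_only_at Q (a, b, c) /\ (exists p0, meets_H0_only_at Q p0) /\ ~ contains_H0 Q) <->
  same_conic DT Q \/ same_conic (Cq411 a b c) Q.
Proof.
move=> Q_neq0; split=> [[QC0 [QH0 _]] | [DT_Q | Cq_Q]].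
- exact: meets_C0_q_H0_once_cases.
- have [DT_H0 DT_notH0] := double_tangent_meets_H0 q_neq0 q_on_C0.
  exact: same_conic_meets DT_Q (double_tangent_meets_C0 q_neq0 q_on_C0) DT_H0 DT_notH0.
- have [Cq_H0 Cq_notH0] := Cq411_meets_H0 q_neq0 q_on_C0.
  exact: same_conic_meets Cq_Q (Cq411_meets_C0 q_neq0 q_on_C0) Cq_H0 Cq_notH0.
Qed.

End Classification.

Theorem lemmaB7 (R : realType) (a b c : R[i]) :
  (a, b, c) <> hzero R[i] ->
  conic_eval (C0 R[i]) (a, b, c) = 0 ->
  b != c ->
  (forall Q : conic R[i], conic_nonzero Q ->
     (meets_C0_only_at Q (a, b, c) /\
      (exists p0 : hcoord R[i], meets_H0_only_at Q p0) /\ ~ contains_H0 Q)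
     <->
     (same_conic (double_line a b (- (2 * c))) Q \/ same_conic (Cq411 a b c) Q))
  /\ meets_H0_only_at (double_line a b (- (2 * c))) (2 * c - b, a, a)
  /\ meets_H0_only_at (Cq411 a b c) (a, 2 * c - b, 2 * c - b).
Proof.
move=> q_neq0; rewrite C0_eval => q_on_C0 b_neq_c; split.
  exact: meets_C0_q_H0_onceP.
split; first exact: (double_tangent_meets_H0 q_neq0 q_on_C0).1.
exact: (Cq411_meets_H0 q_neq0 q_on_C0).1.
Qed.
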